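(* Fix $\lambda\in[0,1)$ and $p\in[0,1]$. There is a unique $\mathbf{v}^I\in\overline{\mathcal{V}}^\infty$ with $\mathbf{F}_i(\mathbf{v}^I)=0$ for all $i\ge 1$. Writing $\mathbf{s}^I_i=\mathbf{v}^I_i-\mathbf{v}^I_{i+1}$ for $i\ge0$, it is given as follows. (1) If $p=0$, then $\mathbf{s}^I_i=\lambda^i$ for all $i\ge1$. (2) If $p\ge\lambda$, then $\mathbf{s}^I_i=0$ for all $i\ge1$. (3) If $0<p<\lambda$ and $\lambda=1-p$, then $\mathbf{s}^I_i=1-\frac{p}{1-p}\,i$ for $1\le i\le \tilde i^*(p,\lambda)$ and $\mathbf{s}^I_i=0$ for $i>\tilde i^*(p,\lambda)$, where $\tilde i^*(p,\lambda)=\lfloor \frac{1-p}{p}\rfloor$. (4) If $0<p<\lambda$ and $\lambda\ne 1-p$, then $\mathbf{s}^I_i=\frac{1-\lambda}{1-(p+\lambda)}\left(\frac{\lambda}{1-p}\right)^i-\frac{p}{1-(p+\lambda)}$ for $1\le i\le i^*(p,\lambda)$ and $\mathbf{s}^I_i=0$ for $i>i^*(p,\lambda)$, where $i^*(p,\lambda)=\left\lfloor \log_{\frac{\lambda}{1-p}}\frac{p}{1-\lambda}\right\rfloor$.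
   Context: $\mathbb{Z}_+=\{0,1,2,\dots\}$. Let $\mathcal{S}=\{\mathbf{s}\in[0,1]^{\mathbb{Z}_+}:1=\mathbf{s}_0\ge\mathbf{s}_1\ge\cdots\ge0\}$, $\overline{\mathcal{S}}^\infty=\{\mathbf{s}\in\mathcal{S}:\sum_{i\ge1}\mathbf{s}_i<\infty\}$, and $\overline{\mathcal{V}}^\infty=\{\mathbf{v}\in\mathbb{R}^{\mathbb{Z}_+}:\mathbf{v}_i=\sum_{j\ge i}\mathbf{s}_j \text{ for all } i, \text{ for some } \mathbf{s}\in\overline{\mathcal{S}}^\infty\}$. For $\mathbf{v}\in\overline{\mathcal{V}}^\infty$ and $i\ge1$ define the drift $\mathbf{F}_i(\mathbf{v})=\lambda(\mathbf{v}_{i-1}-\mathbf{v}_i)-(1-p)(\mathbf{v}_i-\mathbf{v}_{i+1})-g_i(\mathbf{v})$, where $g_i(\mathbf{v})=p$ if $\mathbf{v}_i>0$; $g_i(\mathbf{v})=\min\{\lambda\mathbf{v}_{i-1},p\}$ if $\mathbf{v}_i=0,\mathbf{v}_{i-1}>0$; and $g_i(\mathbf{v})=0$ if $\mathbf{v}_i=\mathbf{v}_{i-1}=0$. *)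

From Stdlib Require Import Reals.
From Coquelicot Require Import Coquelicot.
Open Scope R_scope.

Definition in_S_fin (s : nat -> R) : Prop :=
  s 0%nat = 1 /\
  (forall i : nat, 0 <= s i <= 1) /\
  (forall i : nat, s (S i) <= s i) /\
  ex_series (fun k => s (S k)).

Definition in_V_fin (v : nat -> R) : Prop :=
  exists s : nat -> R, in_S_fin s /\
    forall i : nat, is_series (fun k => s (i + k)%nat) (v i).

Definition g_drift (lam p : R) (v : nat -> R) (i : nat) : R :=
  if Rlt_dec 0 (v i) then p
  else if Rlt_dec 0 (v (i - 1)%nat) then Rmin (lam * v (i - 1)%nat) p
  else 0.

Definition F_drift (lam p : R) (v : nat -> R) (i : nat) : R :=
  lam * (v (i - 1)%nat - v i) - (1 - p) * (v i - v (S i)) - g_drift lam p v i.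

Definition is_fixed_point (lam p : R) (v : nat -> R) : Prop :=
  in_V_fin v /\ forall i : nat, (1 <= i)%nat -> F_drift lam p v i = 0.

(* floor as an integer: Int_part x = up x - 1 = ⌊x⌋ *)
Definition log_base (b a : R) : R := ln a / ln b.

(** The balance equation F_i(v) = 0 only involves s_{i-1} = v_{i-1} - v_i and
    s_i = v_i - v_{i+1}, and for 1 >= s_{i-1} >= s_i >= 0 it holds exactly when
    s_i = max(0, (λ s_{i-1} - p) / (1 - p)).  Hence the fixed point is forced by
    s_0 = 1 and this recursion, and it is summable because s_i <= λ^i.  Before
    the clipping at 0 takes effect the recursion is affine, with solution
    c + (1 - c) (λ/(1-p))^i around its fixed point c = -p/(1-p-λ) (linear in
    i when λ = 1 - p); the sequence stays positive exactly up to the stated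
    threshold index. *)

From Stdlib Require Import Reals ZArith Lra Lia FunctionalExtensionality.
From Coquelicot Require Import Coquelicot.
Open Scope R_scope.

Lemma Series_zero : Series (fun _ => 0) = 0.
Proof.
  rewrite (Series_ext _ (fun _ => 0 * 1)) by (intro; ring).
  rewrite (Series_scal_l 0 (fun _ => 1)). ring.
Qed.

Section TailSums.

Variables (s v : nat -> R).
Hypothesis s_in_S : in_S_fin s.
Hypothesis v_tail : forall i, is_series (fun k => s (i + k)%nat) (v i).

Lemma tail_sum_S i : v i = s i + v (S i).
Proof.
  rewrite <- (is_series_unique _ _ (v_tail i)), <- (is_series_unique _ _ (v_tail (S i))).
  rewrite Series_incr_1 by (eexists; apply v_tail).
  rewrite Nat.add_0_r. f_equal. apply Series_ext. intro k. f_equal. lia.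
Qed.

Lemma in_S_fin_ge0 i : 0 <= s i.
Proof. apply s_in_S. Qed.

Lemma in_S_fin_le i j : (i <= j)%nat -> s j <= s i.
Proof.
  destruct s_in_S as (_ & _ & s_decr & _).
  induction 1; [lra|]. specialize (s_decr m). lra.
Qed.

Lemma tail_sum_ge0 i : 0 <= v i.
Proof.
  rewrite <- (is_series_unique _ _ (v_tail i)), <- Series_zero.
  apply Series_le; [|eexists; apply v_tail].
  intro n. split; [lra | apply in_S_fin_ge0].
Qed.

Lemma tail_sum_eq0 i : s i <= 0 -> v i = 0.
Proof.
  intro s_i_le0. rewrite <- (is_series_unique _ _ (v_tail i)), <- Series_zero.
  apply Series_ext. intro n.
  pose proof (in_S_fin_le i (i + n) ltac:(lia)). pose proof (in_S_fin_ge0 (i + n)). lra.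
Qed.

Lemma tail_sum_gt0 i : 0 < v i <-> 0 < s i.
Proof.
  split; intro H.
  - destruct (Rlt_dec 0 (s i)) as [|s_i_le0]; [easy|].
    rewrite tail_sum_eq0 in H; lra.
  - rewrite tail_sum_S. pose proof (tail_sum_ge0 (S i)). lra.
Qed.

End TailSums.

Definition drift_step (lam p x : R) : R :=
  if Rlt_dec p (lam * x) then (lam * x - p) / (1 - p) else 0.

(* [F_drift] at index [j + 1] in terms of [x = s_j] and [y = s_{j+1}]; the
   [Rmin] branch uses [v_j = s_j], valid because [v_{j+1} = 0] there. *)
Definition drift_balance (lam p x y : R) : R :=
  lam * x - (1 - p) * y -
  (if Rlt_dec 0 y then p else if Rlt_dec 0 x then Rmin (lam * x) p else 0).

Lemma F_drift_balance (lam p : R) (s v : nat -> R) (j : nat) :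
  in_S_fin s -> (forall i, is_series (fun k => s (i + k)%nat) (v i)) ->
  F_drift lam p v (S j) = drift_balance lam p (s j) (s (S j)).
Proof.
  intros s_in_S v_tail.
  unfold F_drift, g_drift, drift_balance. replace (S j - 1)%nat with j by lia.
  pose proof (tail_sum_S s v v_tail j) as Ej.
  pose proof (tail_sum_S s v v_tail (S j)) as ESj.
  pose proof (tail_sum_gt0 s v s_in_S v_tail j) as Pj.
  pose proof (tail_sum_gt0 s v s_in_S v_tail (S j)) as PSj.
  replace (v j - v (S j)) with (s j) by lra.
  replace (v (S j) - v (S (S j))) with (s (S j)) by lra.
  destruct (Rlt_dec 0 (v (S j))), (Rlt_dec 0 (s (S j)));
    destruct (Rlt_dec 0 (v j)), (Rlt_dec 0 (s j)); try tauto.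
  replace (v j) with (s j); [reflexivity|].
  enough (v (S j) = 0) by lra.
  apply (tail_sum_eq0 s v s_in_S v_tail); lra.
Qed.

Lemma pow_le_one x n : 0 <= x <= 1 -> x ^ n <= 1.
Proof. intro Hx. rewrite <- (pow1 n). apply pow_incr. lra. Qed.

Section DriftStep.

Variables (lam p : R).
Hypothesis Hlam : 0 <= lam < 1.
Hypothesis Hp : 0 <= p <= 1.

Lemma drift_step_bounds x : 0 <= x <= 1 -> 0 <= drift_step lam p x <= lam * x.
Proof.
  intro Hx. unfold drift_step. destruct (Rlt_dec p (lam * x)) as [Hpx|]; [|split; nra].
  assert (lam * x <= 1) by nra.
  split; [apply Rdiv_le_0_compat; lra|].
  apply Rle_div_l; [lra | nra].
Qed.

Lemma drift_balance_eq0 x y : 0 <= y <= x -> x <= 1 ->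
  drift_balance lam p x y = 0 <-> y = drift_step lam p x.
Proof.
  intros Hy Hx. unfold drift_balance, drift_step.
  destruct (Rlt_dec 0 y) as [y_gt0|y_le0].
  - destruct (Rlt_dec p (lam * x)) as [Hpx|Hpx].
    + assert (p < 1) by nra.
      split; intro E; [field_simplify_eq; lra | rewrite E; field; lra].
    (* here λx <= p, so λx - p < (1 - p) y unless p = 1, where λx < 1 = p *)
    + split; intro E; [|lra]. destruct (Req_dec p 1); nra.
  - assert (y = 0) as -> by lra.
    destruct (Rlt_dec 0 x), (Rlt_dec p (lam * x)).
    + rewrite Rmin_right by lra. split; intro E; [lra|].
      assert (0 < (lam * x - p) / (1 - p)) by (apply Rdiv_lt_0_compat; nra). lra.
    + rewrite Rmin_left by lra. lra.
    + nra.
    + assert (x = 0) by lra. split; intros; nra.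
Qed.

Lemma F_drift_eq0_iff (s v : nat -> R) (j : nat) :
  in_S_fin s -> (forall i, is_series (fun k => s (i + k)%nat) (v i)) ->
  F_drift lam p v (S j) = 0 <-> s (S j) = drift_step lam p (s j).
Proof.
  intros s_in_S v_tail. rewrite (F_drift_balance lam p s v j s_in_S v_tail).
  destruct s_in_S as (_ & s_bounds & s_decr & _).
  apply drift_balance_eq0; [split; [apply s_bounds | apply s_decr] | apply s_bounds].
Qed.

Fixpoint drift_orbit (n : nat) : R :=
  match n with O => 1 | S n => drift_step lam p (drift_orbit n) end.

Lemma drift_orbit_bounds n : 0 <= drift_orbit n <= lam ^ n.
Proof.
  induction n as [|n IHn]; simpl; [lra|].
  assert (lam ^ n <= 1) by (apply pow_le_one; lra).
  pose proof (drift_step_bounds (drift_orbit n) ltac:(lra)). nra.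
Qed.

Lemma drift_orbit_summable i : ex_series (fun k => drift_orbit (i + k)).
Proof.
  apply (@ex_series_le R_AbsRing R_CompleteNormedModule _ (fun k => lam ^ k)).
  - intro n. pose proof (drift_orbit_bounds (i + n)) as Hb.
    rewrite pow_add in Hb. rewrite Rabs_pos_eq by lra.
    assert (lam ^ i <= 1) by (apply pow_le_one; lra).
    assert (0 <= lam ^ n) by (apply pow_le; lra). nra.
  - apply ex_series_geom. rewrite Rabs_pos_eq; lra.
Qed.

Lemma drift_orbit_in_S : in_S_fin drift_orbit.
Proof.
  assert (pow_le_1 : forall n, lam ^ n <= 1) by (intro; apply pow_le_one; lra).
  split; [reflexivity|]. split; [|split].
  - intro i. pose proof (drift_orbit_bounds i). pose proof (pow_le_1 i). lra.
  - intro i. simpl. pose proof (drift_orbit_bounds i). pose proof (pow_le_1 i).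
    pose proof (drift_step_bounds (drift_orbit i) ltac:(lra)). nra.
  - exact (drift_orbit_summable 1).
Qed.

Definition drift_fixed_point (i : nat) : R := Series (fun k => drift_orbit (i + k)).

Lemma drift_fixed_point_tail i :
  is_series (fun k => drift_orbit (i + k)) (drift_fixed_point i).
Proof. apply Series_correct, drift_orbit_summable. Qed.

Lemma drift_fixed_point_is_fixed : is_fixed_point lam p drift_fixed_point.
Proof.
  split; [exists drift_orbit; split; [apply drift_orbit_in_S | apply drift_fixed_point_tail]|].
  intros [|j] Hj; [lia|].
  now apply (F_drift_eq0_iff drift_orbit); [apply drift_orbit_in_S | apply drift_fixed_point_tail|].
Qed.

Lemma is_fixed_point_unique w : is_fixed_point lam p w -> w = drift_fixed_point.
Proof.
  intros [[s [s_in_S w_tail]] F_eq0].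
  assert (s_orbit : forall n, s n = drift_orbit n).
  { induction n as [|n IHn]; [apply s_in_S|].
    rewrite (proj1 (F_drift_eq0_iff s w n s_in_S w_tail) (F_eq0 (S n) ltac:(lia))).
    now rewrite IHn. }
  apply functional_extensionality. intro i.
  rewrite <- (is_series_unique _ _ (w_tail i)).
  apply Series_ext. intro n. apply s_orbit.
Qed.

Lemma drift_fixed_point_diff i : drift_fixed_point i - drift_fixed_point (S i) = drift_orbit i.
Proof. rewrite (tail_sum_S drift_orbit _ drift_fixed_point_tail i). ring. Qed.

End DriftStep.

Lemma drift_orbit_p0 lam n : 0 <= lam -> drift_orbit lam 0 n = lam ^ n.
Proof.
  intro Hlam. induction n as [|n IHn]; [reflexivity|].
  simpl. rewrite IHn. unfold drift_step.
  pose proof (pow_le lam n Hlam).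
  destruct (Rlt_dec 0 (lam * lam ^ n)); [field | nra].
Qed.

Lemma drift_orbit_absorbed lam p n : 0 <= lam < 1 -> 0 <= p <= 1 -> lam <= p ->
  drift_orbit lam p (S n) = 0.
Proof.
  intros Hlam Hp Hlp. simpl. unfold drift_step.
  destruct (Rlt_dec p (lam * drift_orbit lam p n)); [exfalso|reflexivity].
  pose proof (drift_orbit_bounds lam p Hlam Hp n).
  pose proof (pow_le_one lam n ltac:(lra)). nra.
Qed.

Lemma Z_le_Int_part_iff (i : nat) (x : R) : (Z.of_nat i <= Int_part x)%Z <-> INR i <= x.
Proof.
  destruct (base_Int_part x) as [floor_le floor_gt].
  rewrite INR_IZR_INZ. split; intro Hi.
  - apply IZR_le in Hi. lra.
  - destruct (Z_le_gt_dec (Z.of_nat i) (Int_part x)) as [|Hgt]; [easy|].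
    assert (Hle : (Int_part x + 1 <= Z.of_nat i)%Z) by lia.
    apply IZR_le in Hle. rewrite plus_IZR in Hle. lra.
Qed.

Section AffineRegime.

Variables (lam p : R).
Hypothesis Hlam : 0 <= lam <= 1.
Hypothesis Hp : 0 <= p < 1.

Fixpoint drift_affine (n : nat) : R :=
  match n with O => 1 | S n => (lam * drift_affine n - p) / (1 - p) end.

Lemma drift_affine_decr n : drift_affine (S n) <= drift_affine n.
Proof.
  induction n as [|n IHn].
  - simpl. apply Rle_div_l; lra.
  (* consecutive differences are multiplied by [lam / (1 - p) >= 0] *)
  - change (drift_affine (S (S n))) with ((lam * drift_affine (S n) - p) / (1 - p)).
    change (drift_affine (S n)) with ((lam * drift_affine n - p) / (1 - p)) at 2.
    apply Rmult_le_compat_r; [left; apply Rinv_0_lt_compat; lra | nra].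
Qed.

Lemma drift_orbit_clip n : drift_orbit lam p n = Rmax 0 (drift_affine n).
Proof.
  induction n as [|n IHn]; [simpl; rewrite Rmax_right; lra|].
  simpl drift_orbit. rewrite IHn. unfold drift_step.
  pose proof (drift_affine_decr n).
  destruct (Rle_dec 0 (drift_affine n)).
  - rewrite (Rmax_right 0 (drift_affine n)) by lra.
    change (drift_affine (S n)) with ((lam * drift_affine n - p) / (1 - p)).
    destruct (Rlt_dec p (lam * drift_affine n)).
    + rewrite Rmax_right; [reflexivity|]. apply Rdiv_le_0_compat; lra.
    + rewrite Rmax_left; [reflexivity|]. apply Rle_div_l; lra.
  - rewrite !Rmax_left by lra. destruct (Rlt_dec p (lam * 0)); lra.
Qed.

Lemma drift_orbit_threshold (x : R) :
  (forall n, 0 <= drift_affine n <-> INR n <= x) -> forall i,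
  ((Z.of_nat i <= Int_part x)%Z -> drift_orbit lam p i = drift_affine i) /\
  ((Int_part x < Z.of_nat i)%Z -> drift_orbit lam p i = 0).
Proof.
  intros affine_ge0 i. rewrite drift_orbit_clip.
  split; intro Hi.
  - apply Rmax_right, affine_ge0, Z_le_Int_part_iff, Hi.
  - apply Rmax_left. destruct (Rle_dec 0 (drift_affine i)) as [Hge0|]; [|lra].
    apply affine_ge0, Z_le_Int_part_iff in Hge0. lia.
Qed.

Lemma drift_affine_linear n : lam = 1 - p -> drift_affine n = 1 - p / (1 - p) * INR n.
Proof.
  intro Hlp. induction n as [|n IHn]; [simpl; ring|].
  simpl drift_affine. rewrite IHn, S_INR, Hlp. field. lra.
Qed.

(* The affine map x |-> (λ x - p) / (1 - p) has fixed point -p / (1 - (p + λ)). *)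
Lemma drift_affine_geometric n : lam <> 1 - p ->
  drift_affine n = (1 - lam) / (1 - (p + lam)) * (lam / (1 - p)) ^ n - p / (1 - (p + lam)).
Proof.
  intro Hlp. assert (1 - (p + lam) <> 0) by lra.
  induction n as [|n IHn]; [cbn [drift_affine pow]; field; auto|].
  simpl drift_affine. rewrite IHn. simpl pow. field. split; lra.
Qed.

End AffineRegime.

Lemma ln_le_iff a b : 0 < a -> 0 < b -> a <= b <-> ln a <= ln b.
Proof.
  intros Ha Hb. split; [apply ln_le; lra|].
  intro Hln. destruct (Rle_dec a b) as [|Hba]; [easy|].
  assert (ln b < ln a) by (apply ln_increasing; lra). lra.
Qed.

Lemma div_one_minus_ge0_iff_le_log (r q : R) (n : nat) : 0 < r -> r <> 1 -> 0 < q ->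
  0 <= (r ^ n - q) / (1 - r) <-> INR n <= log_base r q.
Proof.
  intros Hr Hr1 Hq. unfold log_base.
  assert (Hrn : 0 < r ^ n) by (apply pow_lt; lra).
  pose proof (ln_pow r n Hr) as ln_rn.
  destruct (Rlt_dec r 1) as [r_lt1|r_ge1].
  - assert (ln r < 0) by (rewrite <- ln_1; apply ln_increasing; lra).
    replace (ln q / ln r) with (- ln q / - ln r) by (field; lra).
    rewrite <- (Rle_div_r 0), <- Rle_div_r by lra.
    rewrite Rmult_0_l, Rle_minus_r, Rplus_0_l, (ln_le_iff q (r ^ n)), ln_rn by lra.
    lra.
  - assert (0 < ln r) by (rewrite <- ln_1; apply ln_increasing; lra).
    replace ((r ^ n - q) / (1 - r)) with ((q - r ^ n) / (r - 1)) by (field; lra).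
    rewrite <- (Rle_div_r 0), <- Rle_div_r by lra.
    rewrite Rmult_0_l, Rle_minus_r, Rplus_0_l, (ln_le_iff (r ^ n) q), ln_rn by lra.
    lra.
Qed.

Lemma drift_orbit_linear_regime lam p : 0 < p < 1 -> lam = 1 - p -> forall i,
  ((Z.of_nat i <= Int_part ((1 - p) / p))%Z -> drift_orbit lam p i = 1 - p / (1 - p) * INR i) /\
  ((Int_part ((1 - p) / p) < Z.of_nat i)%Z -> drift_orbit lam p i = 0).
Proof.
  intros Hp Hlp i.
  assert (affine_ge0 : forall n, 0 <= drift_affine lam p n <-> INR n <= (1 - p) / p).
  { intro n. rewrite drift_affine_linear by lra.
    replace (1 - p / (1 - p) * INR n) with ((1 - p - INR n * p) / (1 - p)) by (field; lra).
    rewrite <- (Rle_div_r 0), <- Rle_div_r by lra.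
    split; intro; lra. }
  destruct (drift_orbit_threshold lam p ltac:(lra) ltac:(lra) _ affine_ge0 i) as [below above].
  split; intro Hi.
  - rewrite below by easy. apply drift_affine_linear; lra.
  - now apply above.
Qed.

Lemma drift_orbit_geometric_regime lam p : 0 < p < lam -> lam < 1 -> lam <> 1 - p -> forall i,
  ((Z.of_nat i <= Int_part (log_base (lam / (1 - p)) (p / (1 - lam))))%Z ->
     drift_orbit lam p i =
       (1 - lam) / (1 - (p + lam)) * (lam / (1 - p)) ^ i - p / (1 - (p + lam))) /\
  ((Int_part (log_base (lam / (1 - p)) (p / (1 - lam))) < Z.of_nat i)%Z ->
     drift_orbit lam p i = 0).
Proof.
  intros Hp Hlam Hlp i.
  set (r := lam / (1 - p)). set (q := p / (1 - lam)).
  assert (r_ne1 : r <> 1).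
  { intro E. apply Hlp. transitivity (r * (1 - p)); [unfold r; field; lra | rewrite E; ring]. }
  assert (affine_ge0 : forall n, 0 <= drift_affine lam p n <-> INR n <= log_base r q).
  { intro n. rewrite drift_affine_geometric by lra. fold r.
    (* [1 - (p + lam) = (1 - p) (1 - r)] and [p = (1 - lam) q] *)
    replace ((1 - lam) / (1 - (p + lam)) * r ^ n - p / (1 - (p + lam)))
      with ((r ^ n - q) / (1 - r) / ((1 - p) / (1 - lam))) by (unfold r, q; field; lra).
    rewrite <- (Rle_div_r 0), Rmult_0_l by (apply Rdiv_lt_0_compat; lra).
    apply div_one_minus_ge0_iff_le_log; [apply Rdiv_lt_0_compat; lra | easy |].
    apply Rdiv_lt_0_compat; lra. }
  destruct (drift_orbit_threshold lam p ltac:(lra) ltac:(lra) _ affine_ge0 i) as [below above].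
  split; intro Hi.
  - rewrite below by easy. apply drift_affine_geometric; lra.
  - now apply above.
Qed.

Theorem theorem1 (lam p : R) (Hlam : 0 <= lam < 1) (Hp : 0 <= p <= 1) :
  exists vI : nat -> R,
    is_fixed_point lam p vI /\
    (forall w : nat -> R, is_fixed_point lam p w -> w = vI) /\
    (p = 0 ->
       forall i : nat, (1 <= i)%nat -> vI i - vI (S i) = lam ^ i) /\
    (lam <= p ->
       forall i : nat, (1 <= i)%nat -> vI i - vI (S i) = 0) /\
    (0 < p < lam -> lam = 1 - p ->
       forall i : nat, (1 <= i)%nat ->
         ((Z.of_nat i <= Int_part ((1 - p) / p))%Z ->
            vI i - vI (S i) = 1 - p / (1 - p) * INR i) /\
         ((Int_part ((1 - p) / p) < Z.of_nat i)%Z ->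
            vI i - vI (S i) = 0)) /\
    (0 < p < lam -> lam <> 1 - p ->
       forall i : nat, (1 <= i)%nat ->
         ((Z.of_nat i <= Int_part (log_base (lam / (1 - p)) (p / (1 - lam))))%Z ->
            vI i - vI (S i) =
              (1 - lam) / (1 - (p + lam)) * (lam / (1 - p)) ^ i
              - p / (1 - (p + lam))) /\
         ((Int_part (log_base (lam / (1 - p)) (p / (1 - lam))) < Z.of_nat i)%Z ->
            vI i - vI (S i) = 0)).
Proof.
  exists (drift_fixed_point lam p).
  split; [now apply drift_fixed_point_is_fixed|].
  split; [intros w; now apply is_fixed_point_unique|].
  setoid_rewrite (drift_fixed_point_diff lam p Hlam Hp).
  split; [intros -> i _; apply drift_orbit_p0; lra|].
  split; [intros Hlp [|i] Hi; [lia | now apply drift_orbit_absorbed]|].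
  split; intros Hpl Hlp i _.
  - apply drift_orbit_linear_regime; lra.
  - apply drift_orbit_geometric_regime; lra.
Qed.
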